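(* Under the standing setup in the context, there are constants $K\ge1$ and $C\ge0$ such that \[\frac1K\rho(x,y)-C\le\rho_\phi([x],[y])\le K\rho(x,y)+C\quad\text{for all }x,y\in X.\] Consequently the collapsing map $\phi:X\to X^*$, $\phi(x)=[x]$, is a quasi-isometry between $(X,\rho)$ and $(X^*,\rho_\phi)$.
   Context: A semi-metric on a set $Z$ is a function $d:Z\times Z\to[0,\infty)$ with $d(x,y)=0$ iff $x=y$ and $d(x,y)=d(y,x)$. For $b\ge1$, $c\ge0$, a $(b,c)$-metric is a semi-metric with $d(x,z)\le b(d(x,y)+d(y,z))+c$ for all $x,y,z$. A map $g$ from a $(b,c)$-metric space $(X,\rho)$ to a semi-metric space $(Y,\sigma)$ is a quasi-isometry if there are $K\ge1$, $C\ge0$ with $\frac1K\rho(x,y)-C\le\sigma(g(x),g(y))\le K\rho(x,y)+C$ for all $x,y$. Standing setup. $X$ is a topological space (in the paper an $n$-manifold) carrying a $(b,c)$-metric $\rho$. A collapsing set consists of: a subset $S\subseteq X$; a family $\mathcal F$ of pairwise disjoint nonempty subsets of $S$ (''fibers'') whose union is $S$; and a subset $T\subseteq S$ meeting each fiber in exactly one point. The fibering is bounded: $f:=\sup_{F\in\mathcal F}\sup_{u,v\in F}\rho(u,v)<\infty$. For $a,a'\in T$, the length of a continuous path $\gamma:[0,1]\to T$ is $\ell(\gamma)=\sup\sum_{i=1}^k\rho(\gamma(t_{i-1}),\gamma(t_i))$ over partitions $0=t_0<\dots<t_k=1$, and $\rho_p(a,a')$ is the infimum of $\ell(\gamma)$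 over continuous paths in $T$ from $a$ to $a'$. $T$ is a Lipschitz curve: there is $L\ge1$ with $\rho_p(a,a')\le L\,\rho(a,a')$ for all $a,a'\in T$. The collapsing relation is $x\sim y$ iff $x=y$ or $x,y$ lie in a common fiber; $X^*=X/\!\sim$, $\phi(x)=[x]$. For $x\in X$ let $r_x=\inf_{s\in S}\rho(x,s)$; assume this infimum is attained and fix $x_S\in S$ with $\rho(x,x_S)=r_x$, taking $x_S=x$ when $x\in S$. Let $x'$ denote the unique point of $T$ in the fiber containing $x_S$. The collapsed metric is $\rho_\phi([x],[y])=\rho(x,y)$ if $x,y\notin S$ and $\rho(x,y)\le r_x+r_y$, and $\rho_\phi([x],[y])=\rho_p(x',y')+r_x+r_y$ otherwise. *)

From HB Require Import structures.
From mathcomp Require Import all_boot all_order all_algebra.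
From mathcomp Require Import all_classical all_reals all_analysis.
Set Implicit Arguments. Unset Strict Implicit. Unset Printing Implicit Defensive.
Import Order.TTheory GRing.Theory Num.Theory.
Local Open Scope classical_set_scope.
Local Open Scope ring_scope.

Section Collapse.
Variables (R : realType) (X : topologicalType) (rho : X -> X -> R).

Definition semi_metric : Prop :=
  (forall x y, 0 <= rho x y) /\ (forall x y, rho x y = 0 <-> x = y) /\
  (forall x y, rho x y = rho y x).

Definition bc_metric (b c : R) : Prop :=
  1 <= b /\ 0 <= c /\ semi_metric /\
  forall x y z, rho x z <= b * (rho x y + rho y z) + c.

Definition partition01 (k : nat) (t : nat -> R) : Prop :=
  (0 < k)%N /\ t 0%N = 0 /\ t k = 1 /\ forall i, (i < k)%N -> t i < t i.+1.

Definition path_in (T : set X) (a a' : X) (g : R -> X) : Prop :=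
  {within `[0, 1], continuous g} /\ (forall t, t \in `[0, 1] -> T (g t)) /\
  g 0 = a /\ g 1 = a'.

Definition path_length (g : R -> X) : \bar R :=
  ereal_sup [set e | exists (k : nat) (t : nat -> R), partition01 k t /\
              e = (\sum_(i < k) rho (g (t i)) (g (t i.+1)))%:E].

Definition rho_p (T : set X) (a a' : X) : \bar R :=
  ereal_inf [set path_length g | g in [set g | path_in T a a' g]].

Definition dist_to (S : set X) (x : X) : R := inf [set rho x s | s in S].

(* collapsed metric rho_phi([x],[y]), computed on representatives x, y,
   with xp x = x' the point of T in the fiber of the chosen nearest point x_S *)
Definition rho_phi (S T : set X) (xp : X -> X) (x y : X) : \bar R :=
  if `[< ~ S x /\ ~ S y /\ rho x y <= dist_to S x + dist_to S y >]
  then (rho x y)%:E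
  else (rho_p T (xp x) (xp y) + (dist_to S x)%:E + (dist_to S y)%:E)%E.

End Collapse.

From HB Require Import structures.
From mathcomp Require Import all_boot all_order all_algebra.
From mathcomp Require Import all_classical all_reals all_analysis.
From mathcomp Require Import ring lra.
Set Implicit Arguments. Unset Strict Implicit. Unset Printing Implicit Defensive.
Import Order.TTheory GRing.Theory Num.Theory.
Local Open Scope classical_set_scope.
Local Open Scope ring_scope.

(* If x, y lie off S and rho x y <= r_x + r_y, the collapsed distance is rho x y itself.
   Otherwise r_x + r_y <= rho x y (trivially so when x or y lies in S), and
   rho_phi = rho_p(x', y') + r_x + r_y, where rho_p(x', y') is pinched between
   rho(x', y') and L rho(x', y').  The relaxed triangle inequality applied along the
   five-step chains x, x_S, x', y', y_S, y and x', x_S, x, y, y_S, y' compares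
   rho(x, y) with rho(x', y') + r_x + r_y in both directions, losing a factor b^5 and
   an additive 5c, plus twice the fiber diameter f for the two fiber steps. *)

Section DistTo.
Variables (R : realType) (X : topologicalType) (rho : X -> X -> R) (S : set X).
Hypothesis rho_semi : semi_metric rho.

Let rho_ge0 x y : 0 <= rho x y. Proof. by case: rho_semi. Qed.

Lemma dist_to_ge0 x : 0 <= dist_to rho S x.
Proof.
have [S0 | /set0P [s Ss]] := eqVneq S set0.
  by rewrite /dist_to S0 image_set0 inf0.
by apply: lb_le_inf; [exists (rho x s), s | move=> _ [y _ <-]].
Qed.

Lemma dist_to_le x y : S y -> dist_to rho S x <= rho x y.
Proof.
move=> Sy; apply: ge_inf; last by exists y.
by exists 0 => _ [s _ <-].
Qed.

Lemma dist_to_mem x : S x -> dist_to rho S x = 0.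
Proof.
move=> Sx; apply/eqP; rewrite eq_le dist_to_ge0 andbT.
have [_ [/(_ x x) [_ <-] // _]] := rho_semi; exact: dist_to_le.
Qed.

Lemma dist_to_add_le x y :
  ~ (~ S x /\ ~ S y /\ rho x y <= dist_to rho S x + dist_to rho S y) ->
  dist_to rho S x + dist_to rho S y <= rho x y.
Proof.
have [_ [_ rhoC]] := rho_semi.
move=> not_near; have [Sx | nSx] := pselect (S x).
  by rewrite dist_to_mem // add0r rhoC dist_to_le.
have [Sy | nSy] := pselect (S y); first by rewrite (dist_to_mem Sy) addr0 dist_to_le.
by rewrite leNgt; apply/negP => /ltW near; apply: not_near.
Qed.

End DistTo.

Section BCMetricChain.
Variables (R : realType) (X : topologicalType) (rho : X -> X -> R) (b c : R).
Hypothesis rho_bc : bc_metric rho b c.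

Fixpoint chain_length (x : X) (s : seq X) : R :=
  if s is y :: s' then rho x y + chain_length y s' else 0.

Lemma bc_metric_chain (x : X) (s : seq X) :
  rho x (last x s) <= b ^+ size s * (chain_length x s + (size s)%:R * c).
Proof.
have [b1 [c0 [[rho_ge0 [rhoE _]] rho_tri]]] := rho_bc.
elim: s x => [|y s IHs] x /=.
  by rewrite (proj2 (rhoE x x)) // expr0 mul1r mul0r addr0.
have bn1 : 1 <= b ^+ size s by rewrite exprn_ege1.
apply: le_trans (rho_tri x y _) _.
have bIH : b * rho y (last y s) <= b ^+ (size s).+1 * (chain_length y s + (size s)%:R * c).
  by rewrite exprS -mulrA ler_wpM2l ?IHs //; lra.
have bx : b * rho x y <= b ^+ (size s).+1 * rho x y.
  by rewrite exprS ler_wpM2r // ler_peMr //; lra.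
have cb : c <= b ^+ (size s).+1 * c by rewrite ler_peMl // exprn_ege1.
have -> : (size s).+1%:R * c = (size s)%:R * c + c by rewrite mulrSr mulrDl mul1r.
lra.
Qed.

End BCMetricChain.

Section PathMetric.
Variables (R : realType) (X : topologicalType) (rho : X -> X -> R).

Lemma path_length_ge_ends (g : R -> X) :
  ((rho (g 0) (g 1))%:E <= path_length rho g)%E.
Proof.
apply: ereal_sup_ubound; exists 1%N, (fun i => if i == 0%N then 0 else 1).
split; last by rewrite big_ord1.
by do 3!split=> //; move=> i; rewrite ltnS leqn0 => /eqP -> /=; lra.
Qed.

Lemma rho_p_ge (T : set X) (a a' : X) : ((rho a a')%:E <= rho_p rho T a a')%E.
Proof. by apply/ereal_infP => _ [g [_ [_ [<- <-]]] <-]; exact: path_length_ge_ends. Qed.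

End PathMetric.

Section CollapsedMetric.
Variables (R : realType) (X : topologicalType) (rho : X -> X -> R) (b c : R).
Variables (S T : set X) (xS xp : X -> X) (f L : R).
Hypotheses (rho_bc : bc_metric rho b c) (L_ge1 : 1 <= L) (f_ge0 : 0 <= f).
Hypothesis xS_nearest : forall x, rho x (xS x) = dist_to rho S x.
Hypothesis fiber_bound : forall x, rho (xS x) (xp x) <= f.
Hypothesis xp_lipschitz :
  forall x y, (rho_p rho T (xp x) (xp y) <= (L * rho (xp x) (xp y))%:E)%E.

Let rho_semi : semi_metric rho. Proof. by case: rho_bc => _ [_ []]. Qed.
Let rho_ge0 x y : 0 <= rho x y. Proof. by case: rho_semi. Qed.
Let rhoC x y : rho x y = rho y x. Proof. by case: rho_semi => _ []. Qed.
Let b_ge1 : 1 <= b. Proof. by case: rho_bc. Qed.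
Let c_ge0 : 0 <= c. Proof. by case: rho_bc => _ []. Qed.
Let b5_ge1 : 1 <= b ^+ 5. Proof. exact: exprn_ege1. Qed.
Let b5_ge0 : 0 <= b ^+ 5. Proof. exact: le_trans ler01 b5_ge1. Qed.

Local Notation r := (dist_to rho S).
Local Notation D := (2 * f + 5%:R * c).

Let D_ge0 : 0 <= D. Proof. by rewrite addr_ge0 ?mulr_ge0. Qed.

Lemma rho_le_collapsed x y :
  rho x y <= b ^+ 5 * (rho (xp x) (xp y) + r x + r y + D).
Proof.
have := bc_metric_chain rho_bc x [:: xS x; xp x; xp y; xS y; y] => /=.
rewrite xS_nearest (rhoC (xS y)) xS_nearest (rhoC (xp y)) => chain.
apply: le_trans chain _; apply: ler_wpM2l => //.
have := fiber_bound x; have := fiber_bound y; lra.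
Qed.

Lemma collapsed_le_rho x y : r x + r y <= rho x y ->
  rho (xp x) (xp y) <= b ^+ 5 * (2 * rho x y + D).
Proof.
move=> r_le.
have := bc_metric_chain rho_bc (xp x) [:: xS x; x; y; xS y; xp y] => /=.
rewrite (rhoC (xp x) (xS x)) (rhoC (xS x) x) !xS_nearest => chain.
apply: le_trans chain _; apply: ler_wpM2l => //.
have := fiber_bound x; have := fiber_bound y; lra.
Qed.

Definition qi_factor : R := 2 * L * b ^+ 5 + 1.
Definition qi_shift : R := L * b ^+ 5 * D.

Lemma b5_le_qi_factor : b ^+ 5 <= qi_factor.
Proof.
have := b5_ge1; have : b ^+ 5 <= L * b ^+ 5 by rewrite ler_peMl.
by rewrite /qi_factor -mulrA; lra.
Qed.

Lemma qi_factor_ge1 : 1 <= qi_factor.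
Proof. exact: le_trans b5_ge1 b5_le_qi_factor. Qed.

Lemma D_le_qi_shift : D <= qi_shift.
Proof. by rewrite /qi_shift ler_peMl // mulr_ege1. Qed.

Lemma qi_shift_ge0 : 0 <= qi_shift.
Proof. exact: le_trans D_ge0 D_le_qi_shift. Qed.

Lemma rho_phi_quasi_isometry x y :
  ((rho x y / qi_factor - qi_shift)%:E <= rho_phi rho S T xp x y)%E /\
  (rho_phi rho S T xp x y <= (qi_factor * rho x y + qi_shift)%:E)%E.
Proof.
have K_ge1 := qi_factor_ge1; have K_gt0 : 0 < qi_factor by exact: lt_le_trans ltr01 K_ge1.
have C_ge0 := qi_shift_ge0.
have := rho_ge0 x y; have := dist_to_ge0 S rho_semi x; have := dist_to_ge0 S rho_semi y.
rewrite /rho_phi; case: asboolP => [_|far] ry_ge0 rx_ge0 rxy_ge0.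
  have rho_divK : rho x y / qi_factor <= rho x y by rewrite ler_pdivrMr // ler_peMr.
  have rho_mulK : rho x y <= qi_factor * rho x y by rewrite ler_peMl.
  by split; rewrite lee_fin; lra.
have r_le := dist_to_add_le rho_semi far.
set P := rho (xp x) (xp y).
have P_ge0 : 0 <= P := rho_ge0 _ _.
split.
  apply: (@le_trans _ _ (P + r x + r y)%:E); last first.
    by rewrite !EFinD; do 2!apply: leeD2r; exact: rho_p_ge.
  rewrite lee_fin lerBlDr ler_pdivrMr // (le_trans (rho_le_collapsed x y)) //.
  rewrite [_ * qi_factor]mulrC ler_pM ?b5_le_qi_factor ?lerD2l ?D_le_qi_shift //.
  by rewrite (addr_ge0 _ D_ge0) // !addr_ge0.
apply: (@le_trans _ _ (L * P + r x + r y)%:E).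
  by rewrite !EFinD; do 2!apply: leeD2r; exact: xp_lipschitz.
have := ler_wpM2l (le_trans ler01 L_ge1) (collapsed_le_rho r_le).
have -> : L * (b ^+ 5 * (2 * rho x y + D)) = 2 * L * b ^+ 5 * rho x y + qi_shift.
  by rewrite /qi_shift; ring.
by rewrite lee_fin /qi_factor [(_ + 1) * _]mulrDl mul1r -/P => LP_le; lra.
Qed.

End CollapsedMetric.

Theorem mainTheorem9 (R : realType) (X : topologicalType) (rho : X -> X -> R)
  (b c : R) (S T : set X) (F : set (set X)) (xS xp : X -> X) (L : R) :
  bc_metric rho b c ->
  (forall A, F A -> A !=set0 /\ A `<=` S) ->
  (forall A B, F A -> F B -> A <> B -> A `&` B = set0) ->
  S = \bigcup_(A in F) A ->
  T `<=` S ->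
  (forall A, F A -> exists! t, A t /\ T t) ->
  (exists f : R, forall A, F A -> forall u v, A u -> A v -> rho u v <= f) ->
  1 <= L ->
  (forall a a', T a -> T a' -> (rho_p rho T a a' <= (L * rho a a')%:E)%E) ->
  (forall x, S (xS x) /\ rho x (xS x) = dist_to rho S x) ->
  (forall x, S x -> xS x = x) ->
  (forall x, T (xp x) /\ exists2 A, F A & A (xS x) /\ A (xp x)) ->
  exists K C : R, 1 <= K /\ 0 <= C /\
    forall x y : X,
      ((rho x y / K - C)%:E <= rho_phi rho S T xp x y)%E /\
      (rho_phi rho S T xp x y <= (K * rho x y + C)%:E)%E.
Proof.
(* Only the diameter bound on the fiber through [xS x] and [xp x] enters the
   estimate. *)
move=> rho_bc _ _ _ _ _ [f fiber_diam] L_ge1 T_lipschitz xS_near _ xp_fiber.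
have f_ge0 : 0 <= Num.max f 0 by rewrite le_max lexx orbT.
have fiber_bound x : rho (xS x) (xp x) <= Num.max f 0.
  by have [_ [A FA [Ax Ax']]] := xp_fiber x; rewrite le_max (fiber_diam A FA _ _ Ax Ax').
have xS_nearest x : rho x (xS x) = dist_to rho S x by case: (xS_near x).
have xp_lipschitz x y :
    (rho_p rho T (xp x) (xp y) <= (L * rho (xp x) (xp y))%:E)%E.
  by apply: T_lipschitz; [case: (xp_fiber x) | case: (xp_fiber y)].
exists (qi_factor b L), (qi_shift b c (Num.max f 0) L).
split; first exact: qi_factor_ge1 rho_bc L_ge1.
split; first exact: qi_shift_ge0 rho_bc L_ge1 f_ge0.
by move=> x y; apply: rho_phi_quasi_isometry.
Qed.
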